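(* Let $\mathbb{F}\in\{\mathbb{R},\mathbb{C}\}$, let $\Phi=\{\varphi_i\}_{i=1}^M$ be a Parseval frame for $\mathbb{F}^N$, and suppose there is $2\leq k\leq N$ such that $v_k(\Phi_K)$ is the same for all $K\subseteq[M]$ with $|K|=k$. Then $\Phi$ is equiangular.
   Context: A Parseval frame for $\mathbb{F}^N$ is a family $\{\varphi_i\}_{i=1}^M\subseteq\mathbb{F}^N$ whose $N\times M$ matrix $\Phi$ (columns $\varphi_i$) satisfies $\Phi\Phi^*=I$. It is equiangular if $\|\varphi_i\|=\|\varphi_j\|$ for all $i,j$ and $|\langle\varphi_i,\varphi_j\rangle|$ equals a common constant for all $i\ne j$. For $K\subseteq[M]$, $\Phi_K$ is the submatrix of columns indexed by $K$, and $v_k(F)=\sqrt{\det(F^*F)}$ for an $N\times k$ matrix $F$. *)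

From mathcomp Require Import all_boot all_order all_algebra.
From mathcomp Require Import reals.
From mathcomp.real_closed Require Import complex.
Set Implicit Arguments. Unset Strict Implicit. Unset Printing Implicit Defensive.
Import Order.TTheory GRing.Theory Num.Theory.
Local Open Scope ring_scope.

(* Frame notions over a scalar field F equipped with a conjugation [cj]
   (identity for F = R, complex conjugation for F = C) and a square root
   [sq] (Num.sqrt for R, sqrtC for C).  A family {phi_i}_{i<M} in F^N is
   stored as the N x M matrix Phi whose columns are the phi_i. *)
Section Frames.
Variables (F : numFieldType) (cj : F -> F) (sq : F -> F).

Definition adjmx (m n : nat) (A : 'M[F]_(m, n)) : 'M[F]_(n, m) := (map_mx cj A)^T.

Definition parseval (N M : nat) (Phi : 'M[F]_(N, M)) : Prop :=
  Phi *m adjmx Phi = 1%:M.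

Definition subcols (N M : nat) (Phi : 'M[F]_(N, M)) (K : {set 'I_M})
  : 'M[F]_(N, #|K|) := colsub (fun i : 'I_#|K| => enum_val i) Phi.

Definition vol (N k : nat) (G : 'M[F]_(N, k)) : F := sq (\det (adjmx G *m G)).

Definition frame_inner (N M : nat) (Phi : 'M[F]_(N, M)) (i j : 'I_M) : F :=
  \sum_(l < N) Phi l i * cj (Phi l j).

Definition frame_norm (N M : nat) (Phi : 'M[F]_(N, M)) (i : 'I_M) : F :=
  sq (frame_inner Phi i i).

Definition equiangular (N M : nat) (Phi : 'M[F]_(N, M)) : Prop :=
  (forall i j : 'I_M, frame_norm Phi i = frame_norm Phi j) /\
  exists c : F, forall i j : 'I_M, i != j -> `|frame_inner Phi i j| = c.

End Frames.

From mathcomp Require Import all_boot all_order all_algebra.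
From mathcomp Require Import reals.
From mathcomp.real_closed Require Import complex.
From mathcomp Require Import fingroup perm zify ring.
Import Order.TTheory GRing.Theory Num.Theory.
Local Open Scope ring_scope.
Set Implicit Arguments. Unset Strict Implicit. Unset Printing Implicit Defensive.

(* The Gram matrix G = Phi^* Phi of a Parseval frame is an orthogonal projection
   of trace N.  Bordering a principal minor of G by an index i and summing over
   all i gives, by the Schur complement formula and G^2 = G,
     sum_i det G_{K+i} = (N - |K|) det G_K.
   Hence if all principal k-minors are equal, so are all principal minors of
   every order below k; order 1 says that the norms are equal and order 2 that
   |G_ij|^2 = G_ii G_jj - det G_{ij} is constant.  The volumes only determine
   the k-minors through a square root, which is injective over C; over R it is
   injective on positive numbers, and the same identity forbids all k-minors
   to be nonpositive. *)

Lemma det_bordered_unit (R : idomainType) n (A : 'M[R]_n)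
    (b : 'cV_n) (c : 'rV_n) (d : 'M_1) :
  \det A != 0 ->
  \det (block_mx A b c d) = d 0 0 * \det A - (c *m \adj A *m b) 0 0.
Proof.
move=> nzA.
pose X := block_mx 1%:M (- (\adj A *m b)) 0 (\det A)%:M : 'M[R]_(n + 1).
have detX : \det X = \det A by rewrite /X det_ublock det1 det_scalar1 mul1r.
have : \det (block_mx A b c d *m X) =
       \det A * (d 0 0 * \det A - (c *m \adj A *m b) 0 0).
  rewrite /X mulmx_block !mulmx0 !mulmx1 addr0 !mulmxN mulmxA mul_mx_adj.
  rewrite mul_scalar_mx mul_mx_scalar addNr det_lblock det_mx11.
  rewrite -[in RHS]mulmxA !mxE big_ord1 !mxE eqxx mulr1n; congr (_ * _).
  by rewrite addrC.
by rewrite det_mulmx detX mulrC => /mulfI; apply.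
Qed.

(* Reduce to the generic case: -char_poly_mx A has a nonzero determinant and
   specialises to A at X = 0. *)
Lemma det_bordered (R : idomainType) n (A : 'M[R]_n)
    (b : 'cV_n) (c : 'rV_n) (d : 'M_1) :
  \det (block_mx A b c d) = d 0 0 * \det A - (c *m \adj A *m b) 0 0.
Proof.
pose Ap : 'M[{poly R}]_n := - char_poly_mx A.
have nzAp : \det Ap != 0.
  rewrite /Ap -scaleN1r detZ -/(char_poly A).
  rewrite mulf_neq0 ?expf_neq0 ?oppr_eq0 ?oner_eq0 //.
  exact: monic_neq0 (char_poly_monic A).
have evAp : map_mx (horner_eval 0) Ap = A.
  apply/matrixP=> i j; rewrite !mxE horner_evalE.
  by rewrite hornerN hornerD hornerN hornerMn hornerX hornerC mul0rn sub0r opprK.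
have evC m k (B : 'M[R]_(m, k)) : map_mx (horner_eval 0) (map_mx polyC B) = B.
  by apply/matrixP=> i j; rewrite !mxE horner_evalE hornerC.
move/(congr1 (horner_eval 0)):
  (det_bordered_unit (map_mx polyC b) (map_mx polyC c) (map_mx polyC d) nzAp).
rewrite -det_map_mx map_block_mx evAp !evC => ->.
rewrite rmorphB rmorphM /= -det_map_mx evAp; congr (_ * _ - _).
  by rewrite horner_evalE mxE hornerC.
rewrite -[in RHS](evC _ _ c) -[in RHS](evC _ _ b) -evAp.
by rewrite -map_mx_adj -!map_mxM [RHS]mxE.
Qed.

Lemma split_lshift m n (a : 'I_m) : split (lshift n a) = inl a.
Proof. exact: (unsplitK (inl a)). Qed.

Lemma split_rshift m n (a : 'I_n) : split (rshift m a) = inr a.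
Proof. exact: (unsplitK (inr a)). Qed.

Section PrincipalMinors.
Variables (R : idomainType) (M : nat) (G : 'M[R]_M).

Definition pminor n (f : 'I_n -> 'I_M) : R := \det (\matrix_(a, b) G (f a) (f b)).

Definition extend n (f : 'I_n -> 'I_M) (i : 'I_M) (a : 'I_(n + 1)) : 'I_M :=
  if split a is inl a' then f a' else i.

Lemma pminor_eq n (f g : 'I_n -> 'I_M) : f =1 g -> pminor f = pminor g.
Proof. by move=> fg; congr (\det _); apply/matrixP=> a b; rewrite !mxE !fg. Qed.

Lemma pminor_noninj n (f : 'I_n -> 'I_M) : ~~ injectiveb f -> pminor f = 0.
Proof.
case/injectivePn=> a [b neq_ab fab].
by apply: (determinant_alternate neq_ab) => j; rewrite !mxE fab.
Qed.

Lemma pminor_perm n m (f : 'I_n -> 'I_M) (g : 'I_m -> 'I_M) :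
  injective f -> injective g -> codom f =i codom g -> pminor f = pminor g.
Proof.
move=> injf injg fg.
have eq_mn : m = n.
  rewrite -(card_ord m) -(card_ord n) -(card_codom injf) -(card_codom injg).
  by apply: eq_card => x; rewrite fg.
subst m.
have gf a : g a \in codom f by rewrite fg codom_f.
have s_inj : injective (fun a => iinv (gf a)).
  by move=> a b /(congr1 f); rewrite !f_iinv => /injg.
pose s := perm s_inj; rewrite /pminor.
have -> : \matrix_(a, b) G (g a) (g b) =
          row_perm s (col_perm s (\matrix_(a, b) G (f a) (f b))).
  by apply/matrixP=> a b; rewrite !mxE !permE /= !f_iinv.
rewrite row_permE col_permE !det_mulmx !det_perm odd_permV mulrCA.
by rewrite -signr_addb addbb mulr1.
Qed.

Lemma injective_extend n (f : 'I_n -> 'I_M) i :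
  injectiveb (extend f i) = injectiveb f && (i \notin codom f).
Proof.
apply/injectiveP/andP=> [inj_fi | [/injectiveP injf fi] a b]; last first.
  rewrite /extend -{2}[a]splitK -{2}[b]splitK.
  case: (split a) => a'; case: (split b) => b' /=.
  - by move/injf->.
  - by move=> fab; rewrite -fab codom_f in fi.
  - by move=> fab; rewrite fab codom_f in fi.
  - by rewrite (ord1 a') (ord1 b').
split.
  apply/injectiveP=> a b fab; apply: (@lshift_inj n 1); apply: inj_fi.
  by rewrite /extend !split_lshift.
apply/codomP=> -[a fa].
have /inj_fi/eqP : extend f i (lshift 1 a) = extend f i (rshift n ord0).
  by rewrite /extend split_lshift split_rshift.
by rewrite eq_lrshift.
Qed.

Lemma pminor_extend n (f : 'I_n -> 'I_M) i :
  pminor (extend f i) = G i i * pminor f -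
    (\row_b G i (f b) *m \adj (\matrix_(a, b) G (f a) (f b)) *m \col_a G (f a) i) 0 0.
Proof.
rewrite /pminor.
have -> : \matrix_(a, b) G (extend f i a) (extend f i b) =
    block_mx (\matrix_(a, b) G (f a) (f b)) (\col_a G (f a) i)
             (\row_b G i (f b)) (G i i)%:M.
  apply/matrixP=> a b; rewrite /extend !mxE.
  case: (split a) => a'; rewrite !mxE; case: (split b) => b'; rewrite !mxE //.
  by rewrite (ord1 a') (ord1 b') eqxx mulr1n.
by rewrite det_bordered mxE eqxx mulr1n.
Qed.

Lemma pminor1 i : pminor (fun _ : 'I_1 => i) = G i i.
Proof. by rewrite /pminor det_mx11 mxE. Qed.

Lemma pminor_pair i j :
  pminor (extend (fun _ : 'I_1 => i) j) = G j j * G i i - G j i * G i j.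
Proof.
rewrite pminor_extend pminor1 !mxE big_ord1 !mxE big_ord1 !mxE.
by rewrite /cofactor det_mx00 expr0 !mul1r mulr1.
Qed.

Lemma injective_pair (i j : 'I_M) :
  i != j -> injective (extend (fun _ : 'I_1 => i) j).
Proof.
move=> neq_ij; apply/injectiveP; rewrite injective_extend; apply/andP; split.
  by apply/injectiveP=> a b _; rewrite (ord1 a) (ord1 b).
by apply/codomP=> -[a /= eq_ji]; rewrite eq_ji eqxx in neq_ij.
Qed.

Section Idempotent.
Variable N : nat.
Hypotheses (G2 : G *m G = G) (trG : \tr G = N%:R).

(* The Schur complement terms sum to tr (A adj A) = n det A, using G^2 = G. *)
Lemma sum_pminor_extend n (f : 'I_n -> 'I_M) :
  \sum_i pminor (extend f i) = (N%:R - n%:R) * pminor f.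
Proof.
under eq_bigr do rewrite pminor_extend.
rewrite sumrB -mulr_suml -trG mulrBl; congr (_ - _).
set A := \matrix_(a, b) G (f a) (f b).
transitivity (\tr (A *m \adj A)); last first.
  by rewrite mul_mx_adj mxtrace_scalar mulr_natl.
transitivity (\sum_i \sum_a \sum_b G i (f b) * \adj A b a * G (f a) i).
  apply: eq_bigr => i _; rewrite mxE; apply: eq_bigr => a _.
  by rewrite !mxE mulr_suml; apply: eq_bigr => b _; rewrite !mxE.
rewrite exchange_big; apply: eq_bigr => a _; rewrite exchange_big mxE.
apply: eq_bigr => b _.
transitivity (\adj A b a * (G *m G) (f a) (f b)); last by rewrite G2 !mxE mulrC.
by rewrite [(G *m G) _ _]mxE mulr_sumr; apply: eq_bigr => i _; ring.
Qed.

End Idempotent.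
End PrincipalMinors.

Lemma nat_down_ind (P : nat -> Prop) k :
  (forall n, (n < k)%N -> P (n + 1)%N -> P n) -> P k ->
  forall n, (n <= k)%N -> P n.
Proof.
move=> step Pk n le_nk; rewrite -(subKn le_nk).
elim: (k - n)%N (leq_subr n k) => [|d IH] le_dk; first by rewrite subn0.
apply: step; first by lia.
by rewrite (_ : k - d.+1 + 1 = k - d)%N; [apply: IH; lia | lia].
Qed.

Section ProjectionMinors.
Variables (F : numFieldType) (M N : nat) (G : 'M[F]_M).
Hypotheses (G2 : G *m G = G) (trG : \tr G = N%:R).

Definition const_pminors n c :=
  forall g : 'I_n -> 'I_M, injective g -> pminor G g = c.

Lemma card_notin_codom n (f : 'I_n -> 'I_M) :
  injective f -> #|[predC codom f]| = (M - n)%N.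
Proof.
move=> injf.
rewrite -[in RHS](card_ord M) -(cardC (mem (codom f))).
by rewrite card_codom // card_ord addKn.
Qed.

Lemma const_pminors_pred n c : (n < N)%N -> const_pminors (n + 1) c ->
  const_pminors n (c * (M - n)%:R / (N - n)%:R).
Proof.
move=> lt_nN Pc f injf.
have := sum_pminor_extend G2 trG f.
have -> : \sum_i pminor G (extend f i) = \sum_(i in [predC codom f]) c.
  rewrite [RHS]big_mkcond; apply: eq_bigr => i _ /=.
  have := injective_extend f i; rewrite (introT (injectiveP f) injf) inE.
  case: (i \in codom f) => /= inj_fi; first by rewrite pminor_noninj ?inj_fi.
  exact/Pc/injectiveP.
rewrite sumr_const card_notin_codom // -natrB ?(ltnW lt_nN) // => e.
have nz : (N - n)%:R != 0 :> F by rewrite pnatr_eq0 subn_eq0 -ltnNge.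
by rewrite mulr_natr e mulrC mulKf.
Qed.

Lemma pminors_le0_pred n : (n < N)%N ->
  (forall g : 'I_(n + 1) -> 'I_M, injective g -> pminor G g <= 0) ->
  forall f : 'I_n -> 'I_M, injective f -> pminor G f <= 0.
Proof.
move=> lt_nN le0 f injf.
have := sum_pminor_extend G2 trG f; rewrite -natrB ?(ltnW lt_nN) // => e.
have : \sum_i pminor G (extend f i) <= 0.
  rewrite -oppr_ge0 -sumrN; apply: sumr_ge0 => i _; rewrite oppr_ge0.
  have [/injectiveP inj_fi|] := boolP (injectiveb (extend f i)); first exact: le0.
  by move/pminor_noninj->.
by rewrite e pmulr_rle0 // ltr0n subn_gt0.
Qed.

Lemma exists_const_pminors k c n : (k <= N)%N -> const_pminors k c ->
  (n <= k)%N -> exists c', const_pminors n c'.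
Proof.
move=> le_kN Pc; apply: (nat_down_ind (P := fun n => exists c, const_pminors n c)).
  move=> m lt_mk [c' Pc']; exists (c' * (M - m)%:R / (N - m)%:R).
  by apply: const_pminors_pred => //; apply: leq_trans le_kN.
by exists c.
Qed.

(* If all k-minors were nonpositive, so would be the empty minor, which is 1. *)
Lemma exists_pminor_not_le0 k : (k <= N)%N ->
  exists2 g : 'I_k -> 'I_M, injective g & ~~ (pminor G g <= 0).
Proof.
move=> le_kN.
have [/existsP[g /andP[/injectiveP injg g_gt0]]|/existsPn none] :=
  boolP [exists g : {ffun 'I_k -> 'I_M}, injectiveb g && ~~ (pminor G g <= 0)].
  by exists g.
have le0 : forall g : 'I_k -> 'I_M, injective g -> pminor G g <= 0.
  move=> g injg; move: (none [ffun a => g a]).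
  have -> : injectiveb [ffun a => g a].
    by apply/injectiveP=> a b; rewrite !ffunE => /injg.
  by rewrite (pminor_eq G (ffunE _)) negbK.
have inj0 : injective (widen_ord (leq0n M)) by case.
suff : pminor G (widen_ord (leq0n M)) <= 0 by rewrite /pminor det_mx00 ler10.
apply: (nat_down_ind (P := fun n =>
  forall g : 'I_n -> 'I_M, injective g -> pminor G g <= 0) _ le0 (leq0n k) _ inj0).
by move=> n lt_nk; apply: pminors_le0_pred; apply: leq_trans le_kN.
Qed.

Lemma const_pminors_diag_offdiag k c : (2 <= k <= N)%N -> const_pminors k c ->
  (forall i j, G i i = G j j) /\
  exists e, forall i j, i != j -> G i j * G j i = e.
Proof.
case/andP=> le2k le_kN Pc.
have [c1 P1] := exists_const_pminors le_kN Pc (ltnW le2k).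
have [c2 P2] := exists_const_pminors le_kN Pc le2k.
have diagG i : G i i = c1.
  by rewrite -pminor1 P1 // => a b _; rewrite (ord1 a) (ord1 b).
split=> [i j|]; first by rewrite !diagG.
exists (c1 * c1 - c2) => i j neq_ij.
rewrite -(P2 _ (injective_pair neq_ij)) pminor_pair !diagG.
by rewrite opprB addrC subrK mulrC.
Qed.

End ProjectionMinors.

Lemma codom_enum_val (T : finType) (K : {set T}) :
  codom (fun a : 'I_#|K| => enum_val a) =i K.
Proof.
move=> x; apply/codomP/idP=> [[a ->]|Kx]; first exact: enum_valP.
by exists (enum_rank_in Kx x); rewrite enum_rankK_in.
Qed.

Section Frames.
Variables (F : numFieldType) (cj sq : F -> F) (N M : nat) (Phi : 'M[F]_(N, M)).

Definition gram : 'M[F]_M := adjmx cj Phi *m Phi.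

Lemma gram_idem : parseval cj Phi -> gram *m gram = gram.
Proof. by move=> hP; rewrite /gram mulmxA -[_ *m adjmx cj Phi]mulmxA hP mulmx1. Qed.

Lemma gram_trace : parseval cj Phi -> \tr gram = N%:R.
Proof. by move=> hP; rewrite mxtrace_mulC hP mxtrace1. Qed.

Lemma frame_inner_gram i j : frame_inner cj Phi i j = gram j i.
Proof. by rewrite /frame_inner !mxE; apply: eq_bigr => l _; rewrite !mxE mulrC. Qed.

Lemma vol_subcols K :
  vol cj sq (subcols Phi K) = sq (pminor gram (fun a : 'I_#|K| => enum_val a)).
Proof.
congr (sq (\det _)); apply/matrixP=> a b; rewrite !mxE.
by apply: eq_bigr => l _; rewrite !mxE.
Qed.

Lemma sq_pminor_gram n (g : 'I_n -> 'I_M) : injective g ->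
  sq (pminor gram g) = vol cj sq (subcols Phi [set x in codom g]).
Proof.
move=> injg; rewrite vol_subcols; congr sq; apply: pminor_perm => //.
  exact: enum_val_inj.
by move=> x; rewrite codom_enum_val inE.
Qed.

Hypotheses (cjK : involutive cj) (cj0 : cj 0 = 0)
  (cjD : {morph cj : x y / x + y}) (cjM : {morph cj : x y / x * y}).

Lemma gram_conj i j : cj (gram i j) = gram j i.
Proof.
rewrite !mxE (big_morph cj cjD cj0); apply: eq_bigr => l _.
by rewrite !mxE cjM cjK mulrC.
Qed.

Hypotheses (sq_norm : forall x, sq (x * cj x) = `|x|)
  (sq_inj : forall x y, ~~ (x <= 0) -> sq x = sq y -> x = y).

Lemma equiangular_of_const_vol k : parseval cj Phi -> (2 <= k <= N)%N ->
  (forall K1 K2 : {set 'I_M}, #|K1| = k -> #|K2| = k ->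
     vol cj sq (subcols Phi K1) = vol cj sq (subcols Phi K2)) ->
  equiangular cj sq Phi.
Proof.
move=> hP hk hvol; have G2 := gram_idem hP; have trG := gram_trace hP.
have [g0 inj0 g0_pos] := exists_pminor_not_le0 G2 trG (proj2 (andP hk)).
have card_codom_set (g : 'I_k -> 'I_M) :
    injective g -> #|[set x in codom g]| = k.
  by move=> injg; rewrite cardsE card_codom // card_ord.
have Pk : const_pminors gram k (pminor gram g0).
  move=> g injg; apply/esym/sq_inj => //.
  by rewrite !sq_pminor_gram //; apply: hvol; apply: card_codom_set.
have [diagG [e offG]] := const_pminors_diag_offdiag G2 trG hk Pk.
split=> [i j|]; first by rewrite /frame_norm !frame_inner_gram (diagG i j).
exists (sq e) => i j neq_ij.
by rewrite frame_inner_gram -sq_norm gram_conj offG // eq_sym.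
Qed.

End Frames.

Lemma sqrtr_inj_pos (R : rcfType) (x y : R) :
  ~~ (x <= 0) -> Num.sqrt x = Num.sqrt y -> x = y.
Proof.
rewrite -ltNge => x_gt0 sqrt_xy.
have y_gt0 : 0 < y by rewrite -sqrtr_gt0 -sqrt_xy sqrtr_gt0.
by rewrite -(sqr_sqrtr (ltW x_gt0)) sqrt_xy sqr_sqrtr // ltW.
Qed.

Theorem corollary10 (R : realType) :
  (forall (N M k : nat) (Phi : 'M[R]_(N, M)),
     parseval id Phi ->
     (2 <= k <= N)%N ->
     (forall K1 K2 : {set 'I_M}, #|K1| = k -> #|K2| = k ->
        vol id Num.sqrt (subcols Phi K1) = vol id Num.sqrt (subcols Phi K2)) ->
     equiangular id Num.sqrt Phi) /\
  (forall (N M k : nat) (Phi : 'M[R[i]]_(N, M)),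
     parseval (fun z : R[i] => z^*) Phi ->
     (2 <= k <= N)%N ->
     (forall K1 K2 : {set 'I_M}, #|K1| = k -> #|K2| = k ->
        vol (fun z : R[i] => z^*) sqrtC (subcols Phi K1) = vol (fun z : R[i] => z^*) sqrtC (subcols Phi K2)) ->
     equiangular (fun z : R[i] => z^*) sqrtC Phi).
Proof.
split=> N M k Phi.
- apply: equiangular_of_const_vol => //.
    by move=> x; rewrite -expr2 sqrtr_sqr.
  exact: sqrtr_inj_pos.
- apply: equiangular_of_const_vol.
  + exact: conjCK.
  + exact: rmorph0.
  + exact: rmorphD.
  + exact: rmorphM.
  + by move=> x; rewrite -normCK sqrCK.
  + by move=> x y _ /sqrtC_inj.
Qed.
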